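(* Let $T=\langle a,b,c\rangle$ with $1<a<b<c$, $\gcd(a,b)=\gcd(a,c)=\gcd(b,c)=1$ and $c\notin\langle a,b\rangle$, and let $\mathrm L(l,h,w,y)$ be the (unique) L-shape related to $T$. Then $h<a$ and $l<b$.
   Context: $\langle a,b\rangle=\{xa+yb:x,y\in\mathbb N\}$ and $T=\langle a,b,c\rangle=\{xa+yb+zc:x,y,z\in\mathbb N\}$. For $(i,j)\in\mathbb N^2$ let $[\![i,j]\!]=[i,i+1)\times[j,j+1)\subset\mathbb R^2$. For integers $0\le w<l$, $0\le y<h$, the L-shape $\mathrm L(l,h,w,y)$ is the set of unit squares $[\![i,j]\!]$ with $0\le i<l$, $0\le j<h$, excluding those with $i\ge l-w$ and $j\ge h-y$ (it has $lh-wy$ squares). An L-shape $\mathcal H$ is related to $T$ if it consists of exactly $c$ squares, every residue class modulo $c$ equals $ia+jb \bmod c$ for exactly one $[\![i,j]\!]\in\mathcal H$, and for each $[\![i,j]\!]\in\mathcal H$, $ia+jb=\min\{sa+tb:(s,t)\in\mathbb N^2,\ sa+tb\equiv ia+jb \pmod c\}$. *)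

From mathcomp Require Import all_boot.
Set Implicit Arguments.
Unset Strict Implicit.
Unset Printing Implicit Defensive.

Definition in_sg2 (a b n : nat) : Prop := exists x y : nat, n = x * a + y * b.

Definition inL (l h w y i j : nat) : bool :=
  [&& i < l, j < h & ~~ ((l - w <= i) && (h - y <= j))].

Definition cardL (l h w y : nat) : nat :=
  \sum_(i < l) \sum_(j < h) inL l h w y i j.

Definition related (a b c l h w y : nat) : Prop :=
  [/\ cardL l h w y = c,
      (forall r, r < c -> exists i j, inL l h w y i j /\ (i * a + j * b) %% c = r),
      (forall i j i' j', inL l h w y i j -> inL l h w y i' j' ->
          i * a + j * b = i' * a + j' * b %[mod c] -> i = i' /\ j = j')
    &
      (forall i j, inL l h w y i j -> forall s t,
          s * a + t * b = i * a + j * b %[mod c] -> i * a + j * b <= s * a + t * b)].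

(* A square [[i,j]] of the L-shape carries the least element i a + j b of its
   class mod c in <a,b>, so no such value can be written as n + c with n in
   <a,b>.  Since c is a gap of <a,b>, the symmetry of the two-generator
   semigroup gives (a - 1) b = n + c for some n in <a,b>; hence the square
   [[0, a - 1]] is not in the L-shape, i.e. h < a.  Exchanging a and b,
   [[b - 1, 0]] is not in it either, i.e. l < b. *)
From mathcomp Require Import all_boot.
From mathcomp Require Import zify.

Set Implicit Arguments.
Unset Strict Implicit.

Lemma in_sg2C (a b n : nat) : in_sg2 a b n -> in_sg2 b a n.
Proof. by move=> [x [y ->]]; exists y, x; rewrite addnC. Qed.

Lemma coprime_mod_solution (p q c : nat) : 0 < p -> 0 < q -> coprime p q ->
  exists2 t, t < p & t * q = c %[mod p].
Proof.
move=> p0 q0 cop.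
have [km kn E _] := egcdnP p q0.
rewrite gcdnC (eqP cop) in E.
exists ((km * c) %% p); first by rewrite ltn_mod.
rewrite modnMml -mulnA [c * q]mulnC mulnA E mulnDl mul1n.
by rewrite -mulnA [p * c]mulnC mulnA modnMDl.
Qed.

(* Symmetry of <p,q>: for a gap c, (p - 1) q - c = (p q - p - q) - c + p lies in <p,q>. *)
Lemma sg2_gap_complement (p q c : nat) : 0 < p -> 0 < q -> coprime p q ->
  ~ in_sg2 p q c -> exists s t, s * p + t * q + c = (p - 1) * q.
Proof.
move=> p0 q0 cop gap_c.
have [t tp Ht] := coprime_mod_solution c p0 q0 cop.
case: (leqP (t * q) c) => Htc.
  have Hd : p %| c - t * q by rewrite -eqn_mod_dvd // Ht.
  by case: gap_c; exists ((c - t * q) %/ p), t; rewrite divnK //; lia.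
have Hd : p %| t * q - c by rewrite -eqn_mod_dvd ?Ht // ltnW.
exists ((t * q - c) %/ p), (p - 1 - t); rewrite divnK // mulnBl.
have : t * q <= (p - 1) * q by rewrite leq_mul2r; lia.
by move: Htc; set X := t * q; set Y := (p - 1) * q; lia.
Qed.

Lemma related_square_not_shift (a b c l h w y i j s t : nat) : 0 < c ->
  related a b c l h w y -> inL l h w y i j ->
  s * a + t * b + c <> i * a + j * b.
Proof.
move=> c0 [_ _ _ minL] ijL E.
have := minL _ _ ijL s t; rewrite -E modnDr => /(_ erefl); lia.
Qed.

Lemma inL_column0 (l h w y j : nat) : w < l -> j < h -> inL l h w y 0 j.
Proof. by move=> wl jh; rewrite /inL; apply/and3P; split; lia. Qed.

Lemma inL_row0 (l h w y i : nat) : y < h -> i < l -> inL l h w y i 0.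
Proof. by move=> yh il; rewrite /inL; apply/and3P; split; lia. Qed.

Theorem lemma10 (a b c l h w y : nat) :
  1 < a -> a < b -> b < c ->
  coprime a b -> coprime a c -> coprime b c ->
  ~ in_sg2 a b c ->
  w < l -> y < h ->
  related a b c l h w y ->
  h < a /\ l < b.
Proof.
move=> a1 ab bc cab _ _ gap_c wl yh relL.
have a0 : 0 < a by lia.
have b0 : 0 < b by lia.
have c0 : 0 < c by lia.
split; rewrite ltnNge; apply/negP => big.
- have [s [t E]] := sg2_gap_complement a0 b0 cab gap_c.
  have cornerL : inL l h w y 0 (a - 1) by apply: inL_column0; lia.
  by apply: (related_square_not_shift (s := s) (t := t) c0 relL cornerL); rewrite mul0n E.
- have cba : coprime b a by rewrite coprime_sym.
  have gap_c' : ~ in_sg2 b a c by move/in_sg2C.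
  have [s [t E]] := sg2_gap_complement b0 a0 cba gap_c'.
  have cornerL : inL l h w y (b - 1) 0 by apply: inL_row0; lia.
  apply: (related_square_not_shift (s := t) (t := s) c0 relL cornerL).
  by rewrite mul0n addn0 -E [t * a + _]addnC.
Qed.
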